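(* Let $F$ be an algebraically closed field of characteristic $\neq 2$, $R=F[t]$ with the involution ${}^*$ described in the context. Let $a,b\in R$ satisfy $\gcd(a,b)=1$ and $\gcd(b,b^* )=1$. Then there exist $x,y\in R$ with $x$ even (i.e. $x^*=x$) such that $ax+by=1$.
   Context: $R=F[t]$ is the polynomial ring over $F$, and ${}^*$ is the $F$-algebra involution of $R$ that is the identity on $F$ and sends $t$ to $-t$. An element $x\in R$ is even if $x^*=x$ (equivalently $x\in F[t^2]$). *)

From HB Require Import structures.
From mathcomp Require Import all_boot all_order all_algebra all_field.
Set Implicit Arguments. Unset Strict Implicit. Unset Printing Implicit Defensive.
Import GRing.Theory.
Local Open Scope ring_scope.

Definition pinv (F : fieldType) (p : {poly F}) : {poly F} := p \Po (- 'X).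

Definition peven (F : fieldType) (p : {poly F}) : bool := pinv p == p.

From HB Require Import structures.
From mathcomp Require Import all_boot all_order all_algebra all_field.
From mathcomp Require Import ring.
Set Implicit Arguments. Unset Strict Implicit. Unset Printing Implicit Defensive.
Local Open Scope ring_scope.
Import GRing.Theory.

(* Write u a + v b = 1; it suffices to find an even x with b | x - u.  As b
   and b^* are coprime, the Chinese remainder theorem gives w with b | w - u
   and b^* | w - u^*; applying the involution to the latter gives b | w^* - u,
   so x = (w + w^* )/2 works. *)

Section Involution.

Variable F : fieldType.
Implicit Types p q : {poly F}.

Lemma pinvD p q : pinv (p + q) = pinv p + pinv q.
Proof. exact: comp_polyD. Qed.

Lemma pinvB p q : pinv (p - q) = pinv p - pinv q.
Proof. exact: comp_polyB. Qed.

Lemma pinvM p q : pinv (p * q) = pinv p * pinv q.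
Proof. exact: comp_polyM. Qed.

Lemma pinvC (c : F) : pinv c%:P = c%:P.
Proof. exact: comp_polyC. Qed.

Lemma pinvK : involutive (@pinv F).
Proof.
move=> p; rewrite /pinv -comp_polyA -scaleN1r comp_polyZ comp_polyX.
by rewrite !scaleN1r opprK comp_polyXr.
Qed.

Lemma dvdp_pinv p q : p %| q -> pinv p %| pinv q.
Proof. exact: dvdp_comp_poly. Qed.

Lemma peven_symmetrize (c : F) p : peven (c%:P * (p + pinv p)).
Proof. by rewrite /peven pinvM pinvC pinvD pinvK addrC. Qed.

End Involution.

Lemma coprimep_chinese (F : fieldType) (m n : {poly F}) :
  coprimep m n -> forall r s, exists w, m %| w - r /\ n %| w - s.
Proof.
case/Bezout_eq1_coprimepP=> -[p q] /= Bpq r s.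
exists (r * q * n + s * p * m); split.
- have -> : r * q * n + s * p * m - r = m * (p * (s - r)).
    by rewrite -[r in _ - r]mulr1 -Bpq; ring.
  exact: dvdp_mulr.
- have -> : r * q * n + s * p * m - s = n * (q * (r - s)).
    by rewrite -[s in _ - s]mulr1 -Bpq; ring.
  exact: dvdp_mulr.
Qed.

Lemma peven_lift_mod (F : fieldType) (b u : {poly F}) :
  2%:R != 0 :> F -> coprimep b (pinv b) -> exists x, peven x /\ b %| x - u.
Proof.
move=> two_neq0 coprime_b.
have [w [b_wu bt_wu]] := coprimep_chinese coprime_b u (pinv u).
have b_wtu : b %| pinv w - u.
  by rewrite -[b]pinvK -[u]pinvK -pinvB dvdp_pinv.
have half2 : (2%:R)^-1%:P * 2%:R = 1 :> {poly F}.
  by rewrite -polyC_natr -polyCM mulVf.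
exists ((2%:R)^-1%:P * (w + pinv w)); split; first exact: peven_symmetrize.
move: (2%:R)^-1%:P half2 => h half2.
have -> : h * (w + pinv w) - u = h * ((w - u) + (pinv w - u)).
  transitivity (h * (w + pinv w) - h * 2%:R * u); first by rewrite half2 mul1r.
  ring.
by rewrite dvdp_mull // dvdp_add.
Qed.

Theorem lemma3p2 (F : closedFieldType) (hF : (2 \notin [pchar F])%N)
  (a b : {poly F}) (hab : coprimep a b) (hbb : coprimep b (pinv b)) :
  exists x y : {poly F}, peven x /\ a * x + b * y = 1.
Proof.
have two_neq0 : 2%:R != 0 :> F.
  by apply: contra hF => two0; rewrite inE.
case/Bezout_eq1_coprimepP: hab => -[u v] /= Buv.
have [x [even_x /dvdpP[q xu]]] := peven_lift_mod u two_neq0 hbb.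
exists x, (v - a * q); split=> //.
by rewrite -[x](subrK u) xu -Buv; ring.
Qed.
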